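(* Let $k\ge1$ be an integer and $\rho\in(0,1)$. For every $C\in\big[1,\tfrac{2+\rho^k}{2-\rho^k}\big]$, $$\tilde\rho(C)=\frac{C+1}{2}\rho^k-\frac{C-1}{2}.$$
   Context: $\mathbb{R}_k[X]$ denotes real polynomials of degree at most $k$, and $\|p\|_1$ is the sum of absolute values of the coefficients of $p$. For $C\ge1$, $\tilde\rho(C)=\min\{\max_{x\in[0,\rho]}|p(x)| : p\in\mathbb{R}_k[X],\ p(1)=1,\ \|p\|_1\le C\}$. *)

From HB Require Import structures.
From mathcomp Require Import all_boot all_order all_algebra.
From mathcomp Require Import reals.
Set Implicit Arguments. Unset Strict Implicit. Unset Printing Implicit Defensive.
Import Order.TTheory GRing.Theory Num.Theory.
Local Open Scope ring_scope.

Definition l1norm (R : realType) (p : {poly R}) : R :=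
  \sum_(i < size p) `|p`_i|.

Definition is_max_abs_on (R : realType) (p : {poly R}) (rho M : R) : Prop :=
  (exists2 x : R, 0 <= x <= rho & `|p.[x]| = M) /\
  (forall x : R, 0 <= x <= rho -> `|p.[x]| <= M).

Definition rho_tilde_vals (R : realType) (k : nat) (rho C : R) (M : R) : Prop :=
  exists p : {poly R},
    [/\ (size p <= k.+1)%N, p.[1] = 1, l1norm p <= C & is_max_abs_on p rho M].

Definition is_rho_tilde (R : realType) (k : nat) (rho C v : R) : Prop :=
  rho_tilde_vals k rho C v /\ (forall M, rho_tilde_vals k rho C M -> v <= M).

From HB Require Import structures.
From mathcomp Require Import all_boot all_order all_algebra.
From mathcomp Require Import reals.
From mathcomp Require Import lra.
Set Implicit Arguments. Unset Strict Implicit. Unset Printing Implicit Defensive.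
Import Order.TTheory GRing.Theory Num.Theory.
Local Open Scope ring_scope.

(* Write p = \sum_i c_i X^i with p(1) = 1.  Then 1 - p(rho) = \sum_i c_i (1 - rho^i),
   and since 0 <= 1 - rho^i <= 1 - rho^k for i <= k, this is at most the sum of the
   positive coefficients, (||p||_1 + p(1)) / 2 <= (C + 1) / 2, times 1 - rho^k.  Hence
   max_[0,rho] |p| >= p(rho) >= (C + 1) / 2 * rho^k - (C - 1) / 2.  The polynomial
   (C + 1) / 2 * X^k - (C - 1) / 2 attains this value at rho, and the hypothesis
   C <= (2 + rho^k) / (2 - rho^k) is exactly what makes its modulus at rho dominate
   its modulus (C - 1) / 2 at 0. *)

Section RhoTilde.

Variable R : realType.
Implicit Types (p : {poly R}) (a b c s u rho C M : R).

Lemma l1norm_widen n p : (size p <= n)%N -> l1norm p = \sum_(i < n) `|p`_i|.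
Proof.
move=> le_pn; rewrite /l1norm (big_ord_widen n (fun i => `|p`_i|) le_pn).
rewrite big_mkcond /=; apply: eq_bigr => i _.
by case: ltnP => // /(nth_default 0) ->; rewrite normr0.
Qed.

Lemma horner1_sum p : p.[1] = \sum_(i < size p) p`_i.
Proof. by rewrite horner_coef; apply: eq_bigr => i _; rewrite expr1n mulr1. Qed.

Lemma ler_mul_pos_part c s u : 0 <= s <= u -> c * s <= (`|c| + c) / 2 * u.
Proof.
move=> /andP[s_ge0 le_su].
by case: (lerP 0 c) => c_sgn; [rewrite ger0_norm | rewrite ltr0_norm]; nra.
Qed.

Lemma horner1B_le k rho p : (size p <= k.+1)%N -> 0 <= rho <= 1 ->
  p.[1] - p.[rho] <= (l1norm p + p.[1]) / 2 * (1 - rho ^+ k).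
Proof.
move=> le_pk /andP[rho_ge0 rho_le1].
have -> : p.[1] - p.[rho] = \sum_(i < size p) p`_i * (1 - rho ^+ i).
  by rewrite horner1_sum horner_coef -sumrB; apply: eq_bigr => i _; rewrite mulrBr mulr1.
rewrite /l1norm horner1_sum -big_split /= !mulr_suml.
apply: ler_sum => i _; apply: ler_mul_pos_part.
have le_ik : (i <= k)%N by rewrite -ltnS (leq_trans (ltn_ord i) le_pk).
by rewrite subr_ge0 exprn_ile1 //= lerD2l lerN2 ler_wiXn2l.
Qed.

Lemma rho_tilde_vals_ge k rho C M : 0 <= rho <= 1 ->
  rho_tilde_vals k rho C M -> (C + 1) / 2 * rho ^+ k - (C - 1) / 2 <= M.
Proof.
move=> rho01 [p [le_pk p1 l1_le [_ max_ge]]].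
have /andP[rho_ge0 rho_le1] := rho01.
apply: le_trans (max_ge rho _); last by rewrite rho_ge0 lexx.
apply: le_trans (ler_norm _).
have := horner1B_le le_pk rho01; rewrite p1.
have : rho ^+ k <= 1 by rewrite exprn_ile1.
nra.
Qed.

Lemma size_scaleXnB k a b : (size (a *: 'X^k - b%:P)%R <= k.+1)%N.
Proof.
rewrite (leq_trans (size_polyD _ _)) // geq_max size_polyN size_polyC.
rewrite (leq_trans (size_scale_leq _ _)) ?size_polyXn //.
by case: (b != 0).
Qed.

Lemma l1norm_scaleXnB k a b : l1norm (a *: 'X^(k.+1) - b%:P) = `|a| + `|b|.
Proof.
rewrite (l1norm_widen (size_scaleXnB _ _ _)) big_ord_recr big_ord_recl /=.
rewrite big1 => [|i _]; last first.
  by rewrite coefB coefZ coefXn coefC /bump add1n eqSS ltn_eqF ?mulr0 ?subr0 ?normr0.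
by rewrite !coefB !coefZ !coefXn !coefC eqxx /= mulr0 mulr1 sub0r subr0 normrN addr0 addrC.
Qed.

Lemma is_max_abs_on_scaleXnB k rho a b : 0 <= a -> 0 <= b -> 0 <= rho ->
  2 * b <= a * rho ^+ k -> is_max_abs_on (a *: 'X^k - b%:P) rho (a * rho ^+ k - b).
Proof.
move=> a_ge0 b_ge0 rho_ge0 le_2b; split.
  exists rho; first by rewrite rho_ge0 lexx.
  by rewrite !hornerE ger0_norm //; lra.
move=> x /andP[x_ge0 le_x_rho].
have : x ^+ k <= rho ^+ k by rewrite lerXn2r // nnegrE.
have : 0 <= x ^+ k by rewrite exprn_ge0.
by rewrite !hornerE ler_norml; nra.
Qed.

End RhoTilde.

Theorem lemma2 (R : realType) (k : nat) (rho C : R) :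
  (1 <= k)%N -> 0 < rho < 1 ->
  1 <= C <= (2 + rho ^+ k) / (2 - rho ^+ k) ->
  is_rho_tilde k rho C ((C + 1) / 2 * rho ^+ k - (C - 1) / 2).
Proof.
move=> k_gt0 /andP[rho_gt0 rho_lt1] /andP[C_ge1 C_le].
have rho01 : 0 <= rho <= 1 by rewrite !ltW.
have r_le1 : rho ^+ k <= 1 by rewrite exprn_ile1 ?ltW.
have le_2b : 2 * ((C - 1) / 2) <= (C + 1) / 2 * rho ^+ k.
  by move: C_le; rewrite ler_pdivlMr; lra.
split; last by move=> M; exact: rho_tilde_vals_ge.
exists ((C + 1) / 2 *: 'X^k - ((C - 1) / 2)%:P); split.
- exact: size_scaleXnB.
- by rewrite !hornerE expr1n; lra.
- by rewrite -(prednK k_gt0) l1norm_scaleXnB !ger0_norm; lra.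
- by apply: is_max_abs_on_scaleXnB le_2b; [lra | lra | exact: ltW].
Qed.
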